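(* Let $K,H$ be finite dimensional Hilbert spaces and $\phi:B(K)\to B(H)$ a positive linear map, and let $k\ge1$. (i) Assume $\phi\neq0$, and let $\phi_{cp}:B(K)\to B(H)$ be the linear map with Choi matrix $C_{\phi_{cp}}=1-\|C_\phi^+\|^{-1}C_\phi$. Then $\phi$ is $k$-positive if and only if $\sup\{(C_{\phi_{cp}}x,x): x\in S(k),\ \|x\|=1\}\le 1$. (ii) Suppose $k<\min(\dim K,\dim H)$ and there exists a unit vector $y=\sum_{i=1}^k x_i\otimes y_i\in S(k)$ ($x_i\in K$, $y_i\in H$) such that $(C_\phi y, y)=0$ and $C_\phi y\notin X\otimes Y$, where $X=\mathrm{span}(x_i)$ and $Y=\mathrm{span}(y_i)$. Then $\phi$ is not $(k+1)$-positive.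
   Context: Fix matrix units $(e_{ij})$ for $B(K)$; the Choi matrix of $\phi$ is $C_\phi=\sum_{i,j}e_{ij}\otimes\phi(e_{ij})\in B(K\otimes H)$, self-adjoint for positive $\phi$, and $C_\phi^+$ denotes its positive part (in $C_\phi=C_\phi^+-C_\phi^-$ with $C_\phi^\pm\ge0$ of orthogonal supports). $S(k)$ (the Schmidt class) is the set of vectors in $K\otimes H$ of the form $\sum_{i=1}^k x_i\otimes y_i$ with $x_i\in K$, $y_i\in H$ (not necessarily all nonzero). A map $\phi$ is $k$-positive if $\phi\otimes\iota:B(K\otimes L)\to B(H\otimes L)$ is positive for a $k$-dimensional Hilbert space $L$. *)

(* Finite-dimensional Hilbert spaces K = C^m, H = C^n over
   C = R[i] (complex numbers over an arbitrary model R of the reals).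
   B(K) = 'M_m, K (x) H = 'cV_(m*n) with the Kronecker product  *t  of
   mathcomp-real-closed's mxtens (index (i,j) |-> i*n + j). *)
From HB Require Import structures.
From mathcomp Require Import all_boot all_order all_algebra.
From mathcomp Require Export complex mxtens.
From mathcomp Require Export reals.
Set Implicit Arguments.
Unset Strict Implicit.
Unset Printing Implicit Defensive.
Import Order.TTheory GRing.Theory Num.Theory.
Local Open Scope ring_scope.

Section Defs.
Variable C : numClosedFieldType.

Definition adjmx {p q : nat} (A : 'M[C]_(p, q)) : 'M[C]_(q, p) :=
  (map_mx (fun z => z^*) A)^T.

(* inner product (x, y) = y^* x, linear in the first argument *)
Definition dotv {p : nat} (x y : 'cV[C]_p) : C := (adjmx y *m x) 0 0.

Definition psd {p : nat} (A : 'M[C]_p) : Prop :=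
  forall x : 'cV[C]_p, 0 <= dotv (A *m x) x.

Definition posmap {m n : nat} (phi : 'M[C]_m -> 'M[C]_n) : Prop :=
  forall A : 'M[C]_m, psd A -> psd (phi A).

Definition choi {m n : nat} (phi : 'M[C]_m -> 'M[C]_n) : 'M[C]_(m * n) :=
  \sum_(i < m) \sum_(j < m) (delta_mx i j *t phi (delta_mx i j)).

(* block (a,b) of X in B(K (x) L), L = C^k *)
Definition blk {m k : nat} (X : 'M[C]_(m * k)) (a b : 'I_k) : 'M[C]_m :=
  \matrix_(i, j) X (mxtens_index (i, a)) (mxtens_index (j, b)).

(* phi (x) iota : B(K (x) L) -> B(H (x) L), with dim L = k *)
Definition ampl {m n k : nat} (phi : 'M[C]_m -> 'M[C]_n)
  (X : 'M[C]_(m * k)) : 'M[C]_(n * k) :=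
  \sum_(a < k) \sum_(b < k) (phi (blk X a b) *t delta_mx a b).

Definition kpos {m n : nat} (k : nat) (phi : 'M[C]_m -> 'M[C]_n) : Prop :=
  forall X : 'M[C]_(m * k), psd X -> psd (ampl phi X).

Definition tensv {m n : nat} (x : 'cV[C]_m) (y : 'cV[C]_n) : 'cV[C]_(m * n) :=
  x *t y.

Definition in_Sk {m n : nat} (k : nat) (x : 'cV[C]_(m * n)) : Prop :=
  exists (xs : 'I_k -> 'cV[C]_m) (ys : 'I_k -> 'cV[C]_n),
    x = \sum_(i < k) tensv (xs i) (ys i).

(* P is the positive part of the self-adjoint A: A = P - N with P, N >= 0
   having orthogonal supports (ranges). *)
Definition is_pos_part {p : nat} (A P : 'M[C]_p) : Prop :=
  psd P /\ psd (P - A) /\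
  (forall u v : 'cV[C]_p, dotv (P *m u) ((P - A) *m v) = 0).

(* s = ||A|| (operator norm: sup of ||Ax||/||x||, attained in finite dim) *)
Definition is_opnorm {p : nat} (A : 'M[C]_p) (s : C) : Prop :=
  0 <= s /\
  (forall x : 'cV[C]_p, dotv (A *m x) (A *m x) <= s ^+ 2 * dotv x x) /\
  (exists x : 'cV[C]_p, x != 0 /\ dotv (A *m x) (A *m x) = s ^+ 2 * dotv x x).

Definition in_span {p k : nat} (xs : 'I_k -> 'cV[C]_p) (u : 'cV[C]_p) : Prop :=
  exists c : 'I_k -> C, u = \sum_(i < k) c i *: xs i.

Definition in_tens_span {m n k : nat} (xs : 'I_k -> 'cV[C]_m)
  (ys : 'I_k -> 'cV[C]_n) (z : 'cV[C]_(m * n)) : Prop :=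
  exists (r : nat) (us : 'I_r -> 'cV[C]_m) (vs : 'I_r -> 'cV[C]_n),
    (forall l, in_span xs (us l)) /\ (forall l, in_span ys (vs l)) /\
    z = \sum_(l < r) tensv (us l) (vs l).

End Defs.

From HB Require Import structures.
From mathcomp Require Import all_boot all_order all_algebra.
From mathcomp Require Import complex mxtens reals.
From mathcomp Require Import ring spectral.
Import Order.TTheory GRing.Theory Num.Theory.
Local Open Scope ring_scope.
Set Implicit Arguments.
Unset Strict Implicit.

(* For a rank-one positive X = v v^* on K (x) L and w in H (x) L, the value
   ((phi (x) id)(X) w, w) equals (C_phi x, x) with x = sum_a conj(v_a) (x) w_a,
   where v_a, w_a are the components of v, w along a basis of L = C^k.  Every x
   in S(k) arises this way and, by the spectral theorem, positive matrices are
   sums of rank-one ones; hence phi is k-positive iff (C_phi x, x) >= 0 on S(k).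
   Part (i) is this criterion rescaled: for s = ||C_phi^+|| > 0 and a unit x,
   ((1 - C_phi/s) x, x) = 1 - (C_phi x, x)/s, while s = 0 means C_phi <= 0, and
   positivity of phi then forces C_phi to vanish on S(k).
   For (ii), if phi were (k+1)-positive, c |-> (C_phi (y + c u(x)v), y + c u(x)v)
   would be nonnegative and vanish at c = 0, so C_phi y is orthogonal to every
   product vector: C_phi y = 0 lies in X (x) Y. *)

Section InnerProduct.
Variable C : numClosedFieldType.
Implicit Types p q : nat.

Lemma dotvE p (x y : 'cV[C]_p) : dotv x y = \sum_i x i 0 * (y i 0)^*.
Proof. by rewrite /dotv /adjmx mxE; apply: eq_bigr => i _; rewrite !mxE mulrC. Qed.

Lemma dotvDl p (x y z : 'cV[C]_p) : dotv (x + y) z = dotv x z + dotv y z.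
Proof. by rewrite !dotvE -big_split; apply: eq_bigr => i _; rewrite mxE mulrDl. Qed.

Lemma dotvDr p (x y z : 'cV[C]_p) : dotv z (x + y) = dotv z x + dotv z y.
Proof. by rewrite !dotvE -big_split; apply: eq_bigr => i _; rewrite mxE rmorphD mulrDr. Qed.

Lemma dotvZl p a (x z : 'cV[C]_p) : dotv (a *: x) z = a * dotv x z.
Proof. by rewrite !dotvE mulr_sumr; apply: eq_bigr => i _; rewrite mxE mulrA. Qed.

Lemma dotvZr p a (x z : 'cV[C]_p) : dotv z (a *: x) = a^* * dotv z x.
Proof. by rewrite !dotvE mulr_sumr; apply: eq_bigr => i _; rewrite mxE rmorphM mulrCA. Qed.

Lemma dotvC p (x y : 'cV[C]_p) : dotv y x = (dotv x y)^*.
Proof. by rewrite !dotvE rmorph_sum; apply: eq_bigr => i _; rewrite rmorphM /= conjCK mulrC. Qed.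

Lemma dotvNl p (x z : 'cV[C]_p) : dotv (- x) z = - dotv x z.
Proof. by rewrite -scaleN1r dotvZl mulN1r. Qed.

Lemma dotv0l p (z : 'cV[C]_p) : dotv 0 z = 0.
Proof. by rewrite -(scale0r 0) dotvZl mul0r. Qed.

Lemma dotv0r p (z : 'cV[C]_p) : dotv z 0 = 0.
Proof. by rewrite -(scale0r 0) dotvZr conjC0 mul0r. Qed.

Lemma dotv_suml p I (r : seq I) (P : pred I) (F : I -> 'cV[C]_p) z :
  dotv (\sum_(i <- r | P i) F i) z = \sum_(i <- r | P i) dotv (F i) z.
Proof. by elim/big_rec2: _ => [|i y1 y2 _ <-]; rewrite ?dotv0l ?dotvDl. Qed.

Lemma dotv_sumr p I (r : seq I) (P : pred I) (F : I -> 'cV[C]_p) z :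
  dotv z (\sum_(i <- r | P i) F i) = \sum_(i <- r | P i) dotv z (F i).
Proof. by elim/big_rec2: _ => [|i y1 y2 _ <-]; rewrite ?dotv0r ?dotvDr. Qed.

Lemma dotv_ge0 p (x : 'cV[C]_p) : 0 <= dotv x x.
Proof. by rewrite dotvE; apply: sumr_ge0 => i _; apply: mul_conjC_ge0. Qed.

Lemma dotv_eq0 p (x : 'cV[C]_p) : dotv x x = 0 -> x = 0.
Proof.
rewrite dotvE => /eqP; rewrite psumr_eq0 => [/allP x0|i _]; last exact: mul_conjC_ge0.
apply/matrixP => i j; rewrite ord1 mxE; apply/eqP.
by rewrite -mul_conjC_eq0 (implyP (x0 i (mem_index_enum _))).
Qed.

Lemma dotv_delta p (u : 'cV[C]_p) i : dotv u (delta_mx i 0) = u i 0.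
Proof.
rewrite dotvE (bigD1 i) //= big1 => [|r ri]; last by rewrite mxE (negPf ri) conjC0 mulr0.
by rewrite mxE !eqxx conjC1 mulr1 addr0.
Qed.

Lemma dotv_mulmxE p (A : 'M[C]_p) x y :
  dotv (A *m x) y = \sum_r \sum_s (y r 0)^* * A r s * x s 0.
Proof.
rewrite dotvE; apply: eq_bigr => r _; rewrite mxE mulr_suml.
by apply: eq_bigr => s _; rewrite mulrC mulrA.
Qed.

Lemma adjmxK p q (A : 'M[C]_(p, q)) : adjmx (adjmx A) = A.
Proof. by apply/matrixP => i j; rewrite !mxE conjCK. Qed.

Lemma adjmxM p q r (A : 'M[C]_(p, q)) (B : 'M[C]_(q, r)) :
  adjmx (A *m B) = adjmx B *m adjmx A.
Proof. by rewrite /adjmx map_mxM trmx_mul. Qed.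

Lemma dotv_adjmx p q (A : 'M[C]_(p, q)) x y : dotv (A *m x) y = dotv x (adjmx A *m y).
Proof. by rewrite /dotv adjmxM adjmxK mulmxA. Qed.

Lemma dotv_mulmx_scaleB p (A : 'M[C]_p) c x :
  dotv ((1%:M - c *: A) *m x) x = dotv x x - c * dotv (A *m x) x.
Proof. by rewrite mulmxBl mul1mx -scalemxAl dotvDl dotvNl dotvZl. Qed.

End InnerProduct.

Section Perturbation.
Variable C : numClosedFieldType.

Lemma real_quadratic_ge0_lin_eq0 (L q : C) :
  (forall e : C, e \is Num.real -> 0 <= e * L + e ^+ 2 * q) -> L = 0.
Proof.
move=> H.
have qL : 0 <= q + L by have := H 1 (rpred1 _); rewrite mul1r expr1n mul1r addrC.
have qNL : 0 <= q - L.
  by have := H (-1) (rpredN1 _); rewrite mulN1r sqrrN expr1n mul1r addrC.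
have q_ge0 : 0 <= q.
  by have := addr_ge0 qL qNL; rewrite addrACA subrr addr0 -mulr2n pmulrn_lge0.
have LR : L \is Num.real by rewrite -(addKr q L) rpredD ?rpredN ?ger0_real.
have q1_neq0 : q + 1 != 0 by rewrite gt_eqF // ltr_wpDl.
pose x := L / (q + 1).
have xR : x \is Num.real by rewrite rpredM // rpredV rpredD ?rpred1 ?ger0_real.
have := H (- x); rewrite rpredN => /(_ xR).
have -> : - x * L + (- x) ^+ 2 * q = - x ^+ 2.
  by rewrite /x; field.
rewrite oppr_ge0 => x2_le0.
have /eqP : x ^+ 2 = 0 by apply/le_anti; rewrite x2_le0 real_exprn_even_ge0.
by rewrite sqrf_eq0 mulf_eq0 invr_eq0 (negPf q1_neq0) orbF => /eqP.
Qed.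

Lemma dotv_perturb_eq0 p (A : 'M[C]_p) (y z : 'cV[C]_p) :
  dotv (A *m y) y = 0 ->
  (forall c : C, 0 <= dotv (A *m (y + c *: z)) (y + c *: z)) ->
  dotv (A *m y) z = 0.
Proof.
move=> Ay_y H.
set a := dotv (A *m z) y; set b := dotv (A *m y) z; set q := dotv (A *m z) z.
have expand c : dotv (A *m (y + c *: z)) (y + c *: z) = c^* * b + c * a + c * c^* * q.
  by rewrite mulmxDr -scalemxAr !dotvDl !dotvDr !dotvZl !dotvZr Ay_y -/a -/b -/q; ring.
have ab0 : a + b = 0.
  apply: real_quadratic_ge0_lin_eq0 (q) _ => e eR.
  by have := H e; rewrite expand (conj_Creal eR); congr (0 <= _); ring.
have iab0 : 'i * (a - b) = 0.
  apply: real_quadratic_ge0_lin_eq0 (q) _ => e eR.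
  have := H ('i * e); rewrite expand rmorphM /= conjCi (conj_Creal eR).
  have -> : e * ('i * (a - b)) + e ^+ 2 * q =
      - 'i * e * b + 'i * e * a + 'i * e * (- 'i * e) * q + e ^+ 2 * q * (1 + 'i * 'i).
    by ring.
  by rewrite mulCii subrr mulr0 addr0.
have /eqP : a - b = 0 by move/eqP: iab0; rewrite mulf_eq0 (negPf (neq0Ci C)) => /eqP.
move/eqP: ab0; rewrite addr_eq0 => /eqP ->.
by rewrite -opprD oppr_eq0 -mulr2n mulrn_eq0 => /eqP.
Qed.

Lemma mx_dotv_eq0 p (A : 'M[C]_p) : (forall y, dotv (A *m y) y = 0) -> A = 0.
Proof.
move=> A0; apply/matrixP => i j; rewrite mxE.
have := @dotv_perturb_eq0 p A (delta_mx j 0) (delta_mx i 0) (A0 _).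
by rewrite dotv_delta -colE mxE; apply=> c; rewrite A0.
Qed.

Lemma psd_mul_eq0 p (A : 'M[C]_p) y : psd A -> dotv (A *m y) y = 0 -> A *m y = 0.
Proof.
move=> A_psd Ay_y; apply/matrixP => i j; rewrite ord1 [RHS]mxE -dotv_delta.
exact: dotv_perturb_eq0.
Qed.
End Perturbation.

Section PositiveMatrices.
Variable C : numClosedFieldType.
Implicit Types p : nat.

Lemma psd_adjmx p (X : 'M[C]_p) : psd X -> adjmx X = X.
Proof.
move=> X_psd; apply/eqP; rewrite -subr_eq0; apply/eqP/mx_dotv_eq0 => y.
rewrite mulmxBl dotvDl dotvNl [dotv (adjmx X *m _) _]dotv_adjmx adjmxK [dotv y _]dotvC.
by rewrite (conj_Creal (ger0_real (X_psd y))) subrr.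
Qed.

Lemma psd_rank1 p (v : 'cV[C]_p) : psd (v *m adjmx v).
Proof.
move=> z; rewrite -mulmxA [adjmx v *m z]mx11_scalar mul_mx_scalar dotvZl.
by rewrite -/(dotv z v) [dotv v z]dotvC mul_conjC_ge0.
Qed.

Lemma psd_rank1_decomp p (X : 'M[C]_p) : psd X ->
  exists vs : 'I_p -> 'cV[C]_p, X = \sum_l vs l *m adjmx (vs l).
Proof.
move=> X_psd; have X_adj := psd_adjmx X_psd; rewrite /adjmx map_trmx in X_adj.
have /orthomx_spectralP : X \is normalmx by apply/normalmxP; rewrite X_adj.
set P := spectralmx X; set d := spectral_diag X.
rewrite invmx_unitary ?spectral_unitarymx //; set U := map_mx _ P^T.
move=> XE.
have PU : P *m U = 1%:M by apply/unitarymxP/spectral_unitarymx.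
have adjU : adjmx U = P by apply/matrixP => i j; rewrite !mxE conjCK.
have d_ge0 l : 0 <= d 0 l.
  have := X_psd (U *m delta_mx l 0).
  rewrite {1}XE -!mulmxA (mulmxA P) PU mul1mx mulmxA dotv_adjmx adjmxM adjU.
  rewrite -mulmxA (mulmxA P) PU mul1mx -dotv_adjmx -colE dotv_delta.
  by rewrite !mxE eqxx mulr1n.
exists (fun l => sqrtC (d 0 l) *: (U *m delta_mx l 0)).
apply/matrixP => i j; rewrite summxE XE mul_mx_diag mxE.
apply: eq_bigr => l _; rewrite -colE !mxE big_ord1 !mxE rmorphM /= conjCK.
rewrite (conj_Creal (sqrtC_real (d_ge0 l))) -{1}(sqrtCK (d 0 l)) expr2; ring.
Qed.

Lemma opnorm0_eq0 p (P : 'M[C]_p) : is_opnorm P 0 -> P = 0.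
Proof.
move=> [_ [P_le _]]; apply/matrixP => i j.
have : P *m (delta_mx j 0 : 'cV_p) = 0.
  apply: dotv_eq0; apply/le_anti; rewrite dotv_ge0 andbT.
  by have := P_le (delta_mx j 0); rewrite expr0n mul0r.
by rewrite -colE => /matrixP/(_ i 0); rewrite !mxE.
Qed.

End PositiveMatrices.

Section Tensors.
Variables (C : numClosedFieldType) (m n : nat).

Lemma sum_mxtens_index (V : nmodType) (F : 'I_(m * n) -> V) :
  \sum_r F r = \sum_(i < m) \sum_(p < n) F (mxtens_index (i, p)).
Proof.
rewrite pair_big /= (reindex (@mxtens_index m n)) /=; first by apply: eq_bigr => -[].
by exists (@mxtens_unindex m n) => r _; rewrite (mxtens_indexK, mxtens_unindexK).
Qed.

Lemma tensvE (u : 'cV[C]_m) (y : 'cV[C]_n) i p j :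
  tensv u y (mxtens_index (i, p)) j = u i 0 * y p 0.
Proof. by rewrite /tensv mxE mxtens_indexK; case: (mxtens_unindex _) => a b; rewrite !ord1. Qed.

Lemma tensvZl c (u : 'cV[C]_m) (y : 'cV[C]_n) : tensv (c *: u) y = c *: tensv u y.
Proof. by apply/matrixP => r j; rewrite !mxE mulrA. Qed.

Lemma tensv_delta (i : 'I_m) (p : 'I_n) :
  tensv (delta_mx i 0) (delta_mx p 0) = delta_mx (mxtens_index (i, p)) 0 :> 'cV[C]_(m * n).
Proof.
apply/matrixP => r j; case: (mxtens_indexP r) => i' p'.
rewrite tensvE !mxE (inj_eq (can_inj (@mxtens_indexK m n))) xpair_eqE !ord1 !eqxx.
by case: (i' == i); case: (p' == p); rewrite ?mul1r ?mul0r.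
Qed.

Lemma dotv_tensv (u u' : 'cV[C]_m) (v v' : 'cV[C]_n) :
  dotv (tensv u v) (tensv u' v') = dotv u u' * dotv v v'.
Proof.
rewrite !dotvE mulr_suml sum_mxtens_index; apply: eq_bigr => i _.
rewrite mulr_sumr; apply: eq_bigr => p _.
by rewrite !tensvE rmorphM /=; ring.
Qed.

Lemma tensv_orth_eq0 (u : 'cV[C]_(m * n)) :
  (forall i p, dotv u (tensv (delta_mx i 0) (delta_mx p 0)) = 0) -> u = 0.
Proof.
move=> u0; apply/matrixP => r j; case: (mxtens_indexP r) => i p.
by rewrite [j]ord1 mxE -dotv_delta -tensv_delta u0.
Qed.

Lemma in_SkZ k c (x : 'cV[C]_(m * n)) : in_Sk k x -> in_Sk k (c *: x).
Proof.
move=> [xs [ys ->]]; exists (fun a => c *: xs a), ys.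
by rewrite scaler_sumr; apply: eq_bigr => a _; rewrite tensvZl.
Qed.

Lemma in_Sk_add_tensv k (y : 'cV[C]_(m * n)) u v :
  in_Sk k y -> in_Sk k.+1 (y + tensv u v).
Proof.
move=> [xs [ys ->]].
exists (fun a => if unlift ord_max a is Some a' then xs a' else u).
exists (fun a => if unlift ord_max a is Some a' then ys a' else v).
rewrite big_ord_recr /= unlift_none; congr (_ + _); apply: eq_bigr => a _.
have -> : widen_ord (leqnSn k) a = lift ord_max a by apply: ord_inj; rewrite lift_max.
by rewrite liftK.
Qed.

End Tensors.

Section ChoiCriterion.
Variables (C : numClosedFieldType) (m n : nat) (phi : {linear 'M[C]_m -> 'M[C]_n}).

Local Notation conjv x := (map_mx (fun z => z^*) x).

(* [vblk v a] is the component of [v] along the [a]-th basis vector of [C^k],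
   so that [v = \sum_a vblk v a (x) e_a]. *)
Definition vblk k p (v : 'cV[C]_(p * k)) (a : 'I_k) : 'cV[C]_p :=
  \col_i v (mxtens_index (i, a)) 0.

Lemma amplE k (X : 'M[C]_(m * k)) a b p q :
  ampl phi X (mxtens_index (p, a)) (mxtens_index (q, b)) = phi (blk X a b) p q.
Proof.
rewrite /ampl summxE; under eq_bigr do rewrite summxE.
under eq_bigr do under eq_bigr do rewrite tensmxE mxE.
rewrite (bigD1 a) //= [X in _ + X]big1 => [|c ca]; last first.
  by rewrite big1 // => d _; rewrite (eq_sym a) (negPf ca) mulr0.
rewrite (bigD1 b) //= big1 => [|d db]; last by rewrite (eq_sym b) (negPf db) andbF mulr0.
by rewrite !eqxx mulr1 !addr0.
Qed.

Lemma ampl_sum k I (r : seq I) (F : I -> 'M[C]_(m * k)) :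
  ampl phi (\sum_(l <- r) F l) = \sum_(l <- r) ampl phi (F l).
Proof.
apply/matrixP => u v; case: (mxtens_indexP u) => p a; case: (mxtens_indexP v) => q b.
have blk_sum : blk (\sum_(l <- r) F l) a b = \sum_(l <- r) blk (F l) a b.
  by apply/matrixP => i j; rewrite !mxE !summxE; apply: eq_bigr => l _; rewrite mxE.
by rewrite amplE blk_sum linear_sum !summxE; apply: eq_bigr => l _; rewrite amplE.
Qed.

Lemma dotv_ampl k (X : 'M[C]_(m * k)) (w : 'cV[C]_(n * k)) :
  dotv (ampl phi X *m w) w =
  \sum_a \sum_b dotv (phi (blk X a b) *m vblk w b) (vblk w a).
Proof.
rewrite dotv_mulmxE sum_mxtens_index exchange_big /=; apply: eq_bigr => a _.
under eq_bigr do rewrite sum_mxtens_index exchange_big.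
rewrite exchange_big; apply: eq_bigr => b _ /=.
rewrite dotv_mulmxE; apply: eq_bigr => p _; apply: eq_bigr => q _.
by rewrite amplE !mxE.
Qed.

Lemma blk_rank1 k (v : 'cV[C]_(m * k)) a b :
  blk (v *m adjmx v) a b = vblk v a *m adjmx (vblk v b).
Proof. by apply/matrixP => i j; rewrite !mxE !big_ord1 !mxE. Qed.

Lemma dotv_choi_tensv (x x' : 'cV[C]_m) (v v' : 'cV[C]_n) :
  dotv (choi phi *m tensv (conjv x) v) (tensv (conjv x') v') =
  dotv (phi (x' *m adjmx x) *m v) v'.
Proof.
have deltaE (u : 'cV[C]_m) (i j : 'I_m) : delta_mx i j *m u = u j 0 *: delta_mx i 0.
  apply/matrixP => r c; rewrite [c]ord1 !mxE (bigD1 j) //= big1 => [|s sj].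
    by rewrite !mxE eqxx andbT addr0 mulrC.
  by rewrite mxE (negPf sj) andbF mul0r.
rewrite [x' *m _]matrix_sum_delta linear_sum mulmx_suml /choi mulmx_suml !dotv_suml.
apply: eq_bigr => i _; rewrite linear_sum mulmx_suml mulmx_suml !dotv_suml.
apply: eq_bigr => j _.
rewrite /tensv (tensmx_mul (delta_mx i j) (phi (delta_mx i j)) (conjv x) v).
rewrite dotv_tensv deltaE dotvZl [dotv (delta_mx i 0) _]dotvC dotv_delta.
by rewrite linearZ /= -scalemxAl dotvZl !mxE big_ord1 !mxE conjCK [x' i 0 * _]mulrC.
Qed.

Lemma dotv_ampl_rank1 k (v : 'cV[C]_(m * k)) (w : 'cV[C]_(n * k)) :
  let x := \sum_a tensv (conjv (vblk v a)) (vblk w a) in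
  dotv (ampl phi (v *m adjmx v) *m w) w = dotv (choi phi *m x) x.
Proof.
rewrite /= dotv_ampl mulmx_sumr dotv_suml; under [RHS]eq_bigr do rewrite dotv_sumr.
rewrite [RHS]exchange_big; apply: eq_bigr => a _; apply: eq_bigr => b _.
by rewrite blk_rank1 dotv_choi_tensv.
Qed.

Lemma kpos_choiP k :
  kpos k phi <-> forall x, in_Sk k x -> 0 <= dotv (choi phi *m x) x.
Proof.
split=> [kpos_phi x [xs [ys ->]] | Sk_ge0 X X_psd w].
  pose v : 'cV[C]_(m * k) := \col_r (xs (mxtens_unindex r).2 (mxtens_unindex r).1 0)^*.
  pose w : 'cV[C]_(n * k) := \col_r ys (mxtens_unindex r).2 (mxtens_unindex r).1 0.
  have := kpos_phi _ (psd_rank1 v) w; rewrite dotv_ampl_rank1.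
  suff -> : \sum_a tensv (conjv (vblk v a)) (vblk w a) = \sum_a tensv (xs a) (ys a) by [].
  apply: eq_bigr => a _; congr tensv; apply/matrixP => i j.
    by rewrite !mxE mxtens_indexK conjCK !ord1.
  by rewrite !mxE mxtens_indexK !ord1.
have [vs ->] := psd_rank1_decomp X_psd.
rewrite ampl_sum mulmx_suml dotv_suml; apply: sumr_ge0 => l _.
by rewrite dotv_ampl_rank1; apply: Sk_ge0; exists (fun a => conjv (vblk (vs l) a)), (vblk w).
Qed.

Lemma posmap_choi_tensv_ge0 (u : 'cV[C]_m) (v : 'cV[C]_n) :
  posmap phi -> 0 <= dotv (choi phi *m tensv u v) (tensv u v).
Proof.
move=> phi_pos; have uE : u = conjv (conjv u) by apply/matrixP => i j; rewrite !mxE conjCK.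
by rewrite uE dotv_choi_tensv; apply/phi_pos/psd_rank1.
Qed.

End ChoiCriterion.

Section SchmidtClass.
Variables (C : numClosedFieldType) (m n k : nat).

Lemma in_Sk_ge0_of_unit (A : 'M[C]_(m * n)) :
  (forall x, in_Sk k x -> dotv x x = 1 -> 0 <= dotv (A *m x) x) ->
  forall x, in_Sk k x -> 0 <= dotv (A *m x) x.
Proof.
move=> unit_ge0 x xS; have [->|x_neq0] := eqVneq x 0; first by rewrite mulmx0 dotv0l.
have xx_gt0 : 0 < dotv x x.
  by rewrite lt_def dotv_ge0 andbT (contra_neq (@dotv_eq0 _ _ x)).
pose c := (sqrtC (dotv x x))^-1.
have c_gt0 : 0 < c by rewrite invr_gt0 sqrtC_gt0.
have cc_xx : c * (c * dotv x x) = 1.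
  by rewrite mulrA -expr2 exprVn sqrtCK mulVf // lt0r_neq0.
have := unit_ge0 (c *: x) (in_SkZ c xS).
rewrite -scalemxAr !dotvZl !dotvZr (conj_Creal (gtr0_real c_gt0)) cc_xx.
by move=> /(_ erefl); rewrite !pmulr_rge0.
Qed.

Lemma choi_in_Sk_eq0 (phi : {linear 'M[C]_m -> 'M[C]_n}) x :
  posmap phi -> psd (- choi phi) -> in_Sk k x -> choi phi *m x = 0.
Proof.
move=> phi_pos Cneg_psd [xs [ys ->]]; rewrite mulmx_sumr big1 // => a _.
apply/eqP; rewrite -oppr_eq0 -mulNmx; apply/eqP/psd_mul_eq0 => //.
apply/le_anti; rewrite Cneg_psd andbT mulNmx dotvNl oppr_le0.
exact: posmap_choi_tensv_ge0.
Qed.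

Lemma kpos_choi_ker (phi : {linear 'M[C]_m -> 'M[C]_n}) y :
  kpos k.+1 phi -> in_Sk k y -> dotv (choi phi *m y) y = 0 -> choi phi *m y = 0.
Proof.
rewrite kpos_choiP => Sk1_ge0 yS Cy_y; apply: tensv_orth_eq0 => i p.
apply: dotv_perturb_eq0 => // c; apply: Sk1_ge0.
by rewrite -tensvZl; apply: in_Sk_add_tensv.
Qed.

End SchmidtClass.

Unset Implicit Arguments.
Set Strict Implicit.

Theorem theorem4 (R : realType) (m n : nat)
  (phi : {linear 'M[R[i]]_m -> 'M[R[i]]_n}) (k : nat) :
  posmap phi -> (1 <= k)%N ->
  ( (~ (forall A : 'M[R[i]]_m, phi A = 0)) ->
    forall (P : 'M[R[i]]_(m * n)) (s : R[i]),
      is_pos_part (choi phi) P -> is_opnorm P s ->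
      (kpos k phi <->
       (forall x : 'cV[R[i]]_(m * n), in_Sk k x -> dotv x x = 1 ->
          dotv ((1%:M - s^-1 *: choi phi) *m x) x <= 1)) )
  /\
  ( (k < minn m n)%N ->
    (exists (xs : 'I_k -> 'cV[R[i]]_m) (ys : 'I_k -> 'cV[R[i]]_n),
       let y := \sum_(i < k) tensv (xs i) (ys i) in
       dotv y y = 1 /\ dotv (choi phi *m y) y = 0 /\
       ~ in_tens_span xs ys (choi phi *m y)) ->
    ~ kpos k.+1 phi ).
Proof.
move=> phi_pos _; split.
  move=> _ P s [_ [PC_psd _]] s_opnorm; rewrite kpos_choiP.
  have [s0|s_neq0] := eqVneq s 0.
    rewrite s0 in s_opnorm; rewrite (opnorm0_eq0 s_opnorm) sub0r in PC_psd.
    split=> _ x xS; last by rewrite (choi_in_Sk_eq0 phi_pos PC_psd xS) dotv0l.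
    by move=> x1; rewrite s0 invr0 scale0r subr0 mul1mx x1.
  have s_gt0 : 0 < s by rewrite lt_def s_neq0; case: s_opnorm.
  split=> [Sk_ge0 x xS x1 | unit_le1].
    by rewrite dotv_mulmx_scaleB x1 gerBl pmulr_rge0 ?invr_gt0 ?Sk_ge0.
  apply: in_Sk_ge0_of_unit => x xS x1.
  by have := unit_le1 x xS x1; rewrite dotv_mulmx_scaleB x1 gerBl pmulr_rge0 ?invr_gt0.
move=> _ [xs [ys]] /= [_ [Cy_y Cy_notin]] kpos_phi; apply: Cy_notin.
rewrite (kpos_choi_ker kpos_phi _ Cy_y); last by exists xs, ys.
by exists 0%N, (fun _ => 0), (fun _ => 0); split; [case | split; [case | rewrite big_ord0]].
Qed.
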